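(* Let $|\Psi\rangle$ be a normalized state of $N$ qubits given by an open matrix-product state (MPS) in canonical Vidal form $\{\Gamma^{[i]},\Lambda^{[j]}\}$ (as described in the context). Fix a positive integer $\chi'$, and let $|\tilde{\Psi}_{T}\rangle$ be the parallel-compressed MPS obtained by inserting the projector $P_i$ on every bond $i=1,\dots,N-1$. Let $\epsilon(\chi')=\sum_{i=1}^{N-1}\epsilon_i(\chi')$ with $\epsilon_i(\chi')=\sum_{\alpha>\chi'}(\Lambda^{[i]}_{\alpha\alpha})^2$. Then the norm $n=\big\||\tilde{\Psi}_{T}\rangle\big\|$ satisfies $$1-\sqrt{2\epsilon(\chi')}\;\le\; n\;\le\;1.$$
   Context: An open MPS in Vidal form on $N$ sites with local dimension $d$ (here $d=2$) consists of rank-3 tensors $\Gamma^{[i]\sigma_i}$ ($i=1,\dots,N$, $\sigma_i\in\{0,\dots,d-1\}$), each a $\chi_{i-1}\times\chi_i$ matrix for fixed $\sigma_i$, and real diagonal matrices $\Lambda^{[i]}$ of size $\chi_i\times\chi_i$ ($i=0,\dots,N$) with nonnegative diagonal entries in descending order, where $\chi_0=\chi_N=1$ and $\Lambda^{[0]}=\Lambda^{[N]}=(1)$. It represents $|\Psi\rangle=\sum_{\sigma_1,\dots,\sigma_N}\mathrm{Tr}(\Lambda^{[0]}\Gamma^{[1]\sigma_1}\Lambda^{[1]}\Gamma^{[2]\sigma_2}\cdots\Lambda^{[N-1]}\Gamma^{[N]\sigma_N}\Lambda^{[N]})\,|\sigma_1\cdots\sigma_N\rangle$. It is in canonical form if for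 every $i=1,\dots,N$, with $A^{[i]\sigma_i}=\Lambda^{[i-1]}\Gamma^{[i]\sigma_i}$ and $B^{[i]\sigma_i}=\Gamma^{[i]\sigma_i}\Lambda^{[i]}$, one has $\sum_{\sigma_i}(A^{[i]\sigma_i})^\dagger A^{[i]\sigma_i}=I_{\chi_i}$ and $\sum_{\sigma_i}B^{[i]\sigma_i}(B^{[i]\sigma_i})^\dagger=I_{\chi_{i-1}}$. For a normalized canonical MPS, $\sum_\alpha(\Lambda^{[i]}_{\alpha\alpha})^2=1$ for each $i$. For each bond $i\in\{1,\dots,N-1\}$, $P_i=\sum_{\alpha=1}^{\min(\chi',\chi_i)}|\alpha\rangle\langle\alpha|$ is the projector onto the first $\chi'$ standard basis vectors of the $\chi_i$-dimensional bond space (those corresponding to the largest diagonal entries of $\Lambda^{[i]}$). The parallel-compressed state is $|\tilde{\Psi}_{T}\rangle=\sum_{\sigma}\mathrm{Tr}(\Lambda^{[0]}\Gamma^{[1]\sigma_1}P_1\Lambda^{[1]}\Gamma^{[2]\sigma_2}P_2\Lambda^{[2]}\cdots P_{N-1}\Lambda^{[N-1]}\Gamma^{[N]\sigma_N}\Lambda^{[N]})|\sigma_1\cdots\sigma_N\rangle$ (not renormalized). Sums $\sum_{\alpha>\chi'}$ over an empty range are zero. *)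

From HB Require Import structures.
From mathcomp Require Import all_boot all_order all_algebra.
Unset Printing Implicit Defensive.
Import Order.TTheory GRing.Theory Num.Theory.
Local Open Scope ring_scope.

Section MPS.
Variable C : numClosedFieldType.
Variable chi : nat -> nat.

(* Paper's site i (1 <= i <= N) is our index i-1 : Gam (i-1) sigma is the
   chi_{i-1} x chi_i matrix Gamma^{[i] sigma}. *)
Variable Gam : forall k : nat, 'I_2 -> 'M[C]_(chi k, chi k.+1).
Variable lam : forall j : nat, 'I_(chi j) -> C.

Definition Lam (t : nat) : 'M[C]_(chi t) := diag_mx (\row_(a < chi t) lam t a).

Definition adjmx {m n : nat} (A : 'M[C]_(m, n)) : 'M[C]_(n, m) :=
  (map_mx (fun x => x^*) A)^T.

Fixpoint mps_chain (Q : forall j : nat, 'M[C]_(chi j)) (s : nat -> 'I_2) (k : nat)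
  : 'M[C]_(chi 0, chi k) :=
  match k return 'M[C]_(chi 0, chi k) with
  | 0 => Lam 0
  | k'.+1 => mps_chain Q s k' *m Gam k' (s k') *m Q k'.+1 *m Lam k'.+1
  end.

Variable N : nat.

(* the configuration sigma as a function of the (0-based) site index *)
Definition sel (sg : {ffun 'I_N -> 'I_2}) (k : nat) : 'I_2 :=
  if (insub k : option 'I_N) is Some i then sg i else ord0.

(* amplitude: the (unique, since chi_0 = chi_N = 1) entry = trace of the
   1 x 1 product matrix *)
Definition mps_amp (Q : forall j : nat, 'M[C]_(chi j)) (sg : {ffun 'I_N -> 'I_2}) : C :=
  \sum_(a < chi 0) \sum_(b < chi N) mps_chain Q (sel sg) N a b.

Definition state_norm (Q : forall j : nat, 'M[C]_(chi j)) : C :=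
  sqrtC (\sum_(sg : {ffun 'I_N -> 'I_2}) `|mps_amp Q sg| ^+ 2).

(* no insertion: the original state |Psi> *)
Definition noQ : forall j : nat, 'M[C]_(chi j) := fun j => 1%:M.

Definition projQ (chi' : nat) : forall j : nat, 'M[C]_(chi j) :=
  fun j => if (0 < j < N)%N then pid_mx chi' else 1%:M.

Definition eps_i (chi' : nat) (i : nat) : C :=
  \sum_(a < chi i | (chi' <= a)%N) lam i a ^+ 2.

Definition eps (chi' : nat) : C := \sum_(1 <= i < N) eps_i chi' i.

Definition canonical : Prop :=
  forall k : nat, (k < N)%N ->
    (\sum_(s < 2) adjmx (Lam k *m Gam k s) *m (Lam k *m Gam k s) = 1%:M) /\
    (\sum_(s < 2) (Gam k s *m Lam k.+1) *m adjmx (Gam k s *m Lam k.+1) = 1%:M).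

Definition lambda_ok : Prop :=
  (forall j : nat, (j <= N)%N -> forall a : 'I_(chi j), 0 <= lam j a) /\
  (forall j : nat, (j <= N)%N -> forall a b : 'I_(chi j), (a <= b)%N -> lam j b <= lam j a) /\
  (forall a : 'I_(chi 0), lam 0 a = 1) /\
  (forall a : 'I_(chi N), lam N a = 1).

End MPS.

(* Let E_k(Q, Q') be the left environment at bond k of the chains with bond
   insertions Q and Q' (1 for the original state, P for the truncated one), so
   that E_N(Q, Q') = <Psi_Q|Psi_Q'>.  The left canonical condition gives
   E_k(1, 1) = Lambda_k^+ Lambda_k, and by induction E_k(P, P) <= E_k(1, 1) as
   forms.  Since E_k(1, 1) - E_k(1, P) - E_k(P, 1) + E_k(P, P) is the
   environment of Psi - Psi_T, hence positive, the diagonal of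
   E_k(1, P) + E_k(P, 1) is at most 2 Lambda_k^2.  The right canonical
   condition makes the transfer map trace preserving, so
   t_k = tr (E_k(1, P) + E_k(P, 1)) only drops where P_k discards entries, and
   then by at most 2 eps_k: t_N >= t_0 - 2 eps = 2 - 2 eps.  As
   t_N = 2 Re <Psi|Psi_T> <= 1 + n^2, we get n^2 >= 1 - 2 eps, hence
   n >= 1 - sqrt (2 eps); and n <= 1 is E_N(P, P) <= E_N(1, 1) = 1. *)

From HB Require Import structures.
From mathcomp Require Import all_boot all_order all_algebra ring.
Import Order.TTheory GRing.Theory Num.Theory.
Local Open Scope ring_scope.

Local Notation adj A := (adjmx _ A).

Section ConjugateTranspose.
Variable C : numClosedFieldType.

Lemma adjmxE m n (A : 'M[C]_(m, n)) i j : adj A i j = (A j i)^*.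
Proof. by rewrite !mxE. Qed.

Lemma adjmxM m n p (A : 'M[C]_(m, n)) (B : 'M[C]_(n, p)) :
  adj (A *m B) = adj B *m adj A.
Proof. by rewrite /adjmx map_mxM trmx_mul. Qed.

Lemma adjmxB m n (A B : 'M[C]_(m, n)) : adj (A - B) = adj A - adj B.
Proof. by rewrite /adjmx map_mxB linearB. Qed.

Lemma adjmx_diag n (d : 'rV[C]_n) :
  (forall i, (d 0 i)^* = d 0 i) -> adj (diag_mx d) = diag_mx d.
Proof.
move=> d_real; apply/matrixP=> i j; rewrite !mxE eq_sym.
by case: eqP => [->|_]; rewrite ?mulr1n ?mulr0n ?d_real ?conjC0.
Qed.

Lemma adjmx_delta n (a : 'I_n) : adj (delta_mx a 0 : 'cV[C]_n) = delta_mx 0 a.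
Proof. by apply/matrixP=> i j; rewrite !mxE rmorph_nat andbC. Qed.

End ConjugateTranspose.

Section SesquilinearForm.
Variable C : numClosedFieldType.

Definition mxform {n} (u : 'cV[C]_n) (M : 'M[C]_n) (w : 'cV[C]_n) : C :=
  (adj u *m M *m w) 0 0.

Lemma mxformD n (u w : 'cV[C]_n) A B :
  mxform u (A + B) w = mxform u A w + mxform u B w.
Proof. by rewrite /mxform mulmxDr mulmxDl mxE. Qed.

Lemma mxform_sum n (u w : 'cV[C]_n) (I : finType) (M : I -> 'M[C]_n) :
  mxform u (\sum_i M i) w = \sum_i mxform u (M i) w.
Proof. by rewrite /mxform mulmx_sumr mulmx_suml summxE. Qed.

Lemma mxform_mul m n (u w : 'cV[C]_m) (X Y : 'M[C]_(n, m)) M :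
  mxform u (adj X *m M *m Y) w = mxform (X *m u) M (Y *m w).
Proof. by rewrite /mxform adjmxM !mulmxA. Qed.

Lemma mxform_gram m n (X : 'M[C]_(m, n)) u w :
  mxform u (adj X *m X) w = mxform (X *m u) 1%:M (X *m w).
Proof. by rewrite -mxform_mul mulmx1. Qed.

Lemma mxformB n (u w : 'cV[C]_n) M : mxform (u - w) M (u - w) =
  mxform u M u - mxform u M w - mxform w M u + mxform w M w.
Proof. rewrite /mxform adjmxB !(mulmxBl, mulmxBr) !mxE; ring. Qed.

Lemma mxform1E n (z : 'cV[C]_n) : mxform z 1%:M z = \sum_i `|z i 0| ^+ 2.
Proof.
by rewrite /mxform mulmx1 mxE; apply: eq_bigr => i _; rewrite adjmxE normCKC.
Qed.

Lemma mxform1_ge0 n (z : 'cV[C]_n) : 0 <= mxform z 1%:M z.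
Proof. by rewrite mxform1E sumr_ge0 // => i _; rewrite exprn_ge0. Qed.

Lemma mxform_delta n (a : 'I_n) M :
  mxform (delta_mx a 0) M (delta_mx a 0) = M a a.
Proof. by rewrite /mxform adjmx_delta -rowE -colE !mxE. Qed.

Definition coord_proj {n} (keep : pred 'I_n) : 'M[C]_n :=
  diag_mx (\row_i (keep i)%:R).

Lemma coord_projT n : coord_proj (@predT 'I_n) = 1%:M.
Proof.
rewrite /coord_proj -diag_const_mx; congr diag_mx.
by apply/matrixP => i j; rewrite !mxE.
Qed.

Lemma adjmx_coord_proj n (keep : pred 'I_n) :
  adj (coord_proj keep) = coord_proj keep.
Proof. by apply: adjmx_diag => i; rewrite mxE conjC_nat. Qed.

Lemma coord_proj_diagC n (keep : pred 'I_n) d :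
  coord_proj keep *m diag_mx d = diag_mx d *m coord_proj keep.
Proof.
rewrite /coord_proj !mul_diag_mx; apply/matrixP=> i j; rewrite !mxE.
by case: (i == j); rewrite ?mulr1n ?mulr0n ?mulr0 // mulrC.
Qed.

Lemma mxform1_coord_proj_le n (keep : pred 'I_n) z :
  mxform (coord_proj keep *m z) 1%:M (coord_proj keep *m z) <= mxform z 1%:M z.
Proof.
rewrite !mxform1E; apply: ler_sum => i _; rewrite mul_diag_mx !mxE.
by case: (keep i); rewrite ?mul1r // mul0r normr0 expr0n exprn_ge0.
Qed.

End SesquilinearForm.

Arguments mxform {C n}.
Arguments coord_proj {C n}.

Lemma big_ord_singleton {V : nmodType} {n} {F : 'I_n -> V} (x : 'I_n) :
  n = 1%N -> \sum_i F i = F x.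
Proof. by move=> n1; subst n; rewrite big_ord1 (ord1 x). Qed.

Definition flip_at {I : finType} (i : I) (sg : {ffun I -> 'I_2}) :
    {ffun I -> 'I_2} :=
  [ffun j => if j == i then rev_ord (sg j) else sg j].

Lemma flip_atK {I : finType} (i : I) : involutive (flip_at i).
Proof.
by move=> sg; apply/ffunP => j; rewrite !ffunE; case: eqP => // _; apply: rev_ordK.
Qed.

Lemma sum_ord2_rev {V : nmodType} (F : 'I_2 -> V) c :
  \sum_b F b = F c + F (rev_ord c).
Proof.
rewrite big_ord_recl big_ord1; case: c => [[|[|//]] lt_c2]; last rewrite addrC.
  by congr (F _ + F _); apply: val_inj.
by congr (F _ + F _); apply: val_inj.
Qed.

Lemma sum_flip_invariant (I : finType) (V : nmodType) (i : I)
    (H : 'I_2 -> {ffun I -> 'I_2} -> V) :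
  (forall b sg, H b (flip_at i sg) = H b sg) ->
  (\sum_(sg : {ffun I -> 'I_2}) H (sg i) sg) *+ 2 = \sum_sg \sum_b H b sg.
Proof.
move=> H_flip.
rewrite mulr2n {2}(reindex_inj (can_inj (flip_atK i))) -big_split /=.
by apply: eq_bigr => sg _; rewrite H_flip ffunE eqxx (sum_ord2_rev _ (sg i)).
Qed.

Lemma sum_cross_le (C : numClosedFieldType) (I : finType) (x y : I -> C) :
  \sum_i ((x i)^* * y i + (y i)^* * x i) <=
  \sum_i `|x i| ^+ 2 + \sum_i `|y i| ^+ 2.
Proof.
rewrite -big_split -subr_ge0 -sumrB sumr_ge0 // => i _.
have -> : `|x i| ^+ 2 + `|y i| ^+ 2 - ((x i)^* * y i + (y i)^* * x i) =
          `|x i - y i| ^+ 2 by rewrite !normCKC rmorphB /=; ring.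
exact: exprn_ge0.
Qed.

Lemma sqrtC_one_sub_le (C : numClosedFieldType) (x y : C) :
  0 <= x -> 0 <= y -> 1 - x <= y -> 1 - sqrtC x <= sqrtC y.
Proof.
move=> x_ge0 y_ge0 le_y; set s := sqrtC x.
have s_ge0 : 0 <= s by rewrite sqrtC_ge0.
have [s_le1 | s_gt1] := real_leP (ger0_real s_ge0) (real1 C); last first.
  by apply: (@le_trans _ _ 0); rewrite ?sqrtC_ge0 // subr_le0 ltW.
rewrite -(ler_pXn2r (n := 2)) // ?nnegrE ?subr_ge0 ?sqrtC_ge0 // sqrtCK.
apply: le_trans le_y; rewrite -(sqrtCK x) -/s.
have -> : (1 - s) ^+ 2 = 1 - s ^+ 2 - 2%:R * (s - s ^+ 2) by ring.
by rewrite gerBl mulr_ge0 // subr_ge0 expr2 ler_piMr.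
Qed.

Section Environments.
Variable C : numClosedFieldType.
Variable chi : nat -> nat.
Variable Gam : forall k : nat, 'I_2 -> 'M[C]_(chi k, chi k.+1).
Variable lam : forall j : nat, 'I_(chi j) -> C.

Local Notation Lam := (Lam C chi lam).
Local Notation bond_ops := (forall j : nat, 'M[C]_(chi j)).

Definition site_mx (Q : bond_ops) k b : 'M[C]_(chi k, chi k.+1) :=
  Gam k b *m Q k.+1 *m Lam k.+1.

(* [left_env Q Q' k] sums, over the configurations of the first k sites, the
   products M^+ M' of the chains M, M' up to bond k built with Q and Q';
   at the last bond it is the overlap <Psi_Q|Psi_Q'> (see [mps_amp_inner]). *)
Fixpoint left_env (Q Q' : bond_ops) k : 'M[C]_(chi k) :=
  match k return 'M[C]_(chi k) with
  | 0 => adj (Lam 0) *m Lam 0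
  | k'.+1 => \sum_b adj (site_mx Q k' b) *m left_env Q Q' k' *m site_mx Q' k' b
  end.

Lemma mxform_left_envS Q Q' k u w : mxform u (left_env Q Q' k.+1) w =
  \sum_b mxform (site_mx Q k b *m u) (left_env Q Q' k) (site_mx Q' k b *m w).
Proof. by rewrite mxform_sum; apply: eq_bigr => b _; rewrite mxform_mul. Qed.

(* The left-hand side is the squared norm of Psi_Q(k) u - Psi_Q'(k) w. *)
Lemma left_env_diff_ge0 Q Q' k u w :
  0 <= mxform u (left_env Q Q k) u - mxform u (left_env Q Q' k) w
       - mxform w (left_env Q' Q k) u + mxform w (left_env Q' Q' k) w.
Proof.
elim: k u w => [|k IHk] u w.
  by rewrite -mxformB mxform_gram mxform1_ge0.
by rewrite !mxform_left_envS -!sumrB -big_split sumr_ge0 // => b _; apply: IHk.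
Qed.

Definition proj_bonds (keep : forall j, pred 'I_(chi j)) : bond_ops :=
  fun j => coord_proj (keep j).

Local Notation all_bonds := (proj_bonds (fun j => predT)).

Definition transfer {k} (F : 'M[C]_(chi k)) : 'M[C]_(chi k.+1) :=
  \sum_b adj (Gam k b *m Lam k.+1) *m F *m (Gam k b *m Lam k.+1).

Lemma left_env_projS p p' k :
  left_env (proj_bonds p) (proj_bonds p') k.+1 =
  coord_proj (p k.+1) *m transfer (left_env (proj_bonds p) (proj_bonds p') k)
    *m coord_proj (p' k.+1).
Proof.
have site_proj q b : site_mx (proj_bonds q) k b =
    Gam k b *m Lam k.+1 *m coord_proj (q k.+1).
  by rewrite /site_mx -!mulmxA /Lam coord_proj_diagC.
rewrite /= /transfer mulmx_sumr mulmx_suml; apply: eq_bigr => b _.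
by rewrite !site_proj adjmxM adjmx_coord_proj !mulmxA.
Qed.

Lemma transferD k (A B : 'M[C]_(chi k)) :
  transfer (A + B) = transfer A + transfer B.
Proof. by rewrite -big_split; apply: eq_bigr => b _; rewrite mulmxDr mulmxDl. Qed.

Lemma mxform_transfer k (F : 'M[C]_(chi k)) u w : mxform u (transfer F) w =
  \sum_b mxform (Gam k b *m Lam k.+1 *m u) F (Gam k b *m Lam k.+1 *m w).
Proof. by rewrite mxform_sum; apply: eq_bigr => b _; rewrite mxform_mul. Qed.

Lemma mxform_transfer_le {k} {F G : 'M[C]_(chi k)} :
  (forall v, mxform v F v <= mxform v G v) ->
  forall u, mxform u (transfer F) u <= mxform u (transfer G) u.
Proof. by move=> leFG u; rewrite !mxform_transfer ler_sum. Qed.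

Lemma Lam_gram_diag j a : (adj (Lam j) *m Lam j) a a = `|lam j a| ^+ 2.
Proof. by rewrite mul_mx_diag !mxE eqxx mulr1n normCKC. Qed.

Lemma mxtrace_unit_gram j : chi j = 1%N -> (forall a, lam j a = 1) ->
  \tr (adj (Lam j) *m Lam j) = 1.
Proof.
move=> chij lamj; rewrite /mxtrace (big_ord_singleton (cast_ord (esym chij) ord0)) //.
by rewrite Lam_gram_diag lamj normr1 expr1n.
Qed.

Variable N : nat.
Hypothesis canon : canonical C chi Gam lam N.

Lemma transfer_gram k : (k < N)%N ->
  transfer (adj (Lam k) *m Lam k) = adj (Lam k.+1) *m Lam k.+1.
Proof.
move=> ltkN; rewrite -[in RHS](mulmx1 (adj _)) -(canon _ ltkN).1.
rewrite mulmx_sumr mulmx_suml; apply: eq_bigr => b _.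
by rewrite !adjmxM !mulmxA.
Qed.

Lemma mxtrace_transfer k (F : 'M[C]_(chi k)) :
  (k < N)%N -> \tr (transfer F) = \tr F.
Proof.
move=> ltkN; rewrite -[F in RHS]mul1mx -(canon _ ltkN).2 mulmx_suml !raddf_sum.
by apply: eq_bigr => b _; rewrite /= mxtrace_mulC !mulmxA.
Qed.

Lemma left_envT k : (k <= N)%N ->
  left_env all_bonds all_bonds k = adj (Lam k) *m Lam k.
Proof.
elim: k => [|k IHk] ltkN //.
rewrite left_env_projS !coord_projT mul1mx mulmx1 (IHk (ltnW ltkN)).
exact: transfer_gram.
Qed.

Variable keep : forall j, pred 'I_(chi j).
Local Notation P := (proj_bonds keep).
Local Notation I := all_bonds.

Lemma left_env_proj_le k u : (k <= N)%N ->
  mxform u (left_env P P k) u <= mxform u (adj (Lam k) *m Lam k) u.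
Proof.
elim: k u => [|k IHk] u ltkN //.
rewrite left_env_projS -{1}adjmx_coord_proj mxform_mul.
apply: le_trans (mxform_transfer_le (fun v => IHk v (ltnW ltkN)) _) _.
rewrite transfer_gram // !mxform_gram mulmxA /Lam -coord_proj_diagC -mulmxA.
exact: mxform1_coord_proj_le.
Qed.

Lemma left_env_cross_le k u : (k <= N)%N ->
  mxform u (left_env I P k + left_env P I k) u <=
  2%:R * mxform u (adj (Lam k) *m Lam k) u.
Proof.
move=> lekN; rewrite mxformD mulr2n mulrDl mul1r.
have := left_env_diff_ge0 I P k u u; rewrite left_envT //.
set g := mxform u _ u; set q := mxform u (left_env P P k) u.
set x := mxform u (left_env I P k) u; set y := mxform u (left_env P I k) u.
have -> : g - x - y + q = g + q - (x + y) by ring.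
rewrite subr_ge0 => /le_trans; apply; rewrite lerD2l.
exact: left_env_proj_le.
Qed.

Lemma transfer_cross_diag_le k a : (k < N)%N ->
  transfer (left_env I P k + left_env P I k) a a <= 2%:R * `|lam k.+1 a| ^+ 2.
Proof.
move=> ltkN; rewrite -Lam_gram_diag -!mxform_delta -transfer_gram //.
rewrite !mxform_transfer mulr_sumr ler_sum // => b _.
exact: left_env_cross_le (ltnW ltkN).
Qed.

(* At the last bond this is <Psi|Psi_P> + <Psi_P|Psi> (see [mps_amp_inner]). *)
Definition overlap_trace k := \tr (left_env I P k) + \tr (left_env P I k).

Definition discarded_weight j := \sum_(a < chi j | ~~ keep j a) `|lam j a| ^+ 2.

Lemma overlap_trace_step k : (k < N)%N ->
  overlap_trace k <= overlap_trace k.+1 + 2%:R * discarded_weight k.+1.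
Proof.
move=> ltkN; set F := transfer (left_env I P k + left_env P I k).
have tr_k : overlap_trace k = \sum_a F a a.
  by rewrite /overlap_trace -!(mxtrace_transfer _ _ ltkN) -raddfD -transferD.
have tr_kS : overlap_trace k.+1 = \sum_(a | keep k.+1 a) F a a.
  rewrite /overlap_trace !left_env_projS !coord_projT mul1mx mulmx1.
  rewrite [\tr (_ *m coord_proj _)]mxtrace_mulC -raddfD -mulmxDr -transferD /= -/F.
  rewrite /mxtrace [RHS]big_mkcond; apply: eq_bigr => a _.
  by rewrite /coord_proj mul_diag_mx !mxE; case: (keep _ a); rewrite ?mul1r ?mul0r.
rewrite tr_k tr_kS [X in X <= _](bigID (keep k.+1)) /= lerD2l.
rewrite /discarded_weight mulr_sumr ler_sum // => a _.
exact: transfer_cross_diag_le.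
Qed.

Lemma overlap_trace_le k : (k <= N)%N ->
  overlap_trace 0 <= overlap_trace k + 2%:R * \sum_(j < k) discarded_weight j.+1.
Proof.
elim: k => [|k IHk] ltkN; first by rewrite big_ord0 mulr0 addr0.
apply: le_trans (IHk (ltnW ltkN)) _.
by rewrite big_ord_recr mulrDr addrA addrAC lerD2r overlap_trace_step.
Qed.

End Environments.

Section ConfigurationSums.
Variable C : numClosedFieldType.
Variable chi : nat -> nat.
Variable Gam : forall k : nat, 'I_2 -> 'M[C]_(chi k, chi k.+1).
Variable lam : forall j : nat, 'I_(chi j) -> C.
Variable N : nat.

Local Notation bond_ops := (forall j : nat, 'M[C]_(chi j)).
Local Notation chain Q s k := (mps_chain C chi Gam lam Q s k).
Local Notation site_mx := (site_mx C chi Gam lam).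
Local Notation left_env := (left_env C chi Gam lam).

Lemma mps_chain_ext Q Q' s s' k : (forall j, Q j = Q' j) ->
  (forall j, (j < k)%N -> s j = s' j) -> chain Q s k = chain Q' s' k.
Proof.
move=> eq_Q; elim: k => //= k IHk eq_s; rewrite eq_Q IHk ?eq_s // => j ltjk.
by rewrite eq_s // ltnW.
Qed.

Lemma state_norm_ext Q Q' : (forall j, Q j = Q' j) ->
  state_norm C chi Gam lam N Q = state_norm C chi Gam lam N Q'.
Proof.
move=> eq_Q; congr sqrtC; apply: eq_bigr => sg _.
by rewrite /mps_amp (mps_chain_ext _ _ _ (sel N sg) _ eq_Q (fun _ _ => erefl)).
Qed.

Definition config_gram (Q Q' : bond_ops) k : 'M[C]_(chi k) :=
  \sum_(sg : {ffun 'I_N -> 'I_2})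
    adj (chain Q (sel N sg) k) *m chain Q' (sel N sg) k.

Lemma config_gramS Q Q' k : (k < N)%N ->
  config_gram Q Q' k.+1 *+ 2 =
  \sum_b adj (site_mx Q k b) *m config_gram Q Q' k *m site_mx Q' k b.
Proof.
move=> ltkN; pose i := Ordinal ltkN.
have sel_i sg : sel N sg k = sg i by rewrite /sel insubT.
have sel_flip sg j : (j < k)%N -> sel N (flip_at i sg) j = sel N sg j.
  rewrite /sel; case: insubP => // j' _ <- ltjk; rewrite ffunE.
  by case: eqP => // ji; move: ltjk; rewrite ji ltnn.
pose H b sg := adj (chain Q (sel N sg) k *m site_mx Q k b) *m
               (chain Q' (sel N sg) k *m site_mx Q' k b).
transitivity ((\sum_(sg : {ffun 'I_N -> 'I_2}) H (sg i) sg) *+ 2).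
  by congr (_ *+ 2); apply: eq_bigr => sg _; rewrite /H /= sel_i !mulmxA.
rewrite sum_flip_invariant => [|b sg]; last first.
  by rewrite /H !(mps_chain_ext _ _ _ _ _ (fun=> erefl) (sel_flip sg)).
rewrite exchange_big; apply: eq_bigr => b _.
rewrite mulmx_sumr mulmx_suml; apply: eq_bigr => sg _.
by rewrite /H adjmxM !mulmxA.
Qed.

(* The sites after k do not enter the chains up to bond k, so each of their
   2 ^ (N - k) configurations contributes [left_env Q Q' k]. *)
Lemma config_gram_left_env Q Q' k : (k <= N)%N ->
  (2 ^ k)%:R *: config_gram Q Q' k = (2 ^ N)%:R *: left_env Q Q' k.
Proof.
elim: k => [|k IHk] lekN.
  rewrite expn0 scale1r /config_gram /= sumr_const card_ffun !card_ord.
  by rewrite scaler_nat.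
rewrite expnSr natrM -scalerA [2%:R *: _]scaler_nat config_gramS //.
rewrite !scaler_sumr; apply: eq_bigr => b _.
rewrite scalemxAl [_ *: (_ *m config_gram _ _ _)]scalemxAr (IHk (ltnW lekN)).
by rewrite -scalemxAr -scalemxAl.
Qed.

Lemma config_gramN Q Q' : config_gram Q Q' N = left_env Q Q' N.
Proof.
apply: (scalerI (a := (2 ^ N)%:R)); first by rewrite pnatr_eq0 expn_eq0.
exact: config_gram_left_env.
Qed.

Hypotheses (chi0 : chi 0 = 1%N) (chiN : chi N = 1%N).

Lemma mps_amp_inner Q Q' :
  \sum_(sg : {ffun 'I_N -> 'I_2})
     (mps_amp C chi Gam lam N Q sg)^* * mps_amp C chi Gam lam N Q' sg =
  \tr (left_env Q Q' N).
Proof.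
pose z0 := cast_ord (esym chi0) ord0.
pose zN := cast_ord (esym chiN) ord0.
rewrite -config_gramN /mxtrace (big_ord_singleton zN chiN) summxE.
apply: eq_bigr => sg _; rewrite mxE (big_ord_singleton z0 chi0) adjmxE /mps_amp.
by rewrite !(big_ord_singleton z0 chi0) !(big_ord_singleton zN chiN).
Qed.

Lemma mps_norm2 Q :
  \sum_sg `|mps_amp C chi Gam lam N Q sg| ^+ 2 = \tr (left_env Q Q N).
Proof.
by rewrite -mps_amp_inner //; apply: eq_bigr => sg _; rewrite normCKC.
Qed.

Lemma state_norm_left_env Q :
  state_norm C chi Gam lam N Q = sqrtC (\tr (left_env Q Q N)).
Proof. by rewrite /state_norm mps_norm2. Qed.

Lemma mxtrace_left_env_ge0 Q : 0 <= \tr (left_env Q Q N).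
Proof. by rewrite -mps_norm2 sumr_ge0 // => sg _; rewrite exprn_ge0. Qed.


End ConfigurationSums.

Section Truncation.
Variable C : numClosedFieldType.
Variable chi : nat -> nat.
Variable Gam : forall k : nat, 'I_2 -> 'M[C]_(chi k, chi k.+1).
Variable lam : forall j : nat, 'I_(chi j) -> C.
Variables N chi' : nat.
Hypotheses (chi0 : chi 0 = 1%N) (chiN : chi N = 1%N).
Hypothesis lam_ge0 : forall j, (j <= N)%N -> forall a : 'I_(chi j), 0 <= lam j a.
Hypotheses (lam0 : forall a, lam 0 a = 1) (lamN : forall a, lam N a = 1).
Hypothesis canon : canonical C chi Gam lam N.

Definition truncation_keep j (a : 'I_(chi j)) := (0 < j < N)%N ==> (a < chi')%N.

Local Notation keep := truncation_keep.
Local Notation I := (proj_bonds C chi (fun j => predT)).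
Local Notation P := (proj_bonds C chi keep).
Local Notation left_env := (left_env C chi Gam lam).

Lemma projQ_truncation j : projQ C chi N chi' j = P j.
Proof.
rewrite /projQ /proj_bonds /truncation_keep; case: ifP => _; last by rewrite coord_projT.
apply/matrixP => a b; rewrite !mxE.
case: (eqVneq a b) => [->|/negPf ne]; rewrite ?eqxx ?mulr1n //=.
by rewrite mulr0n; move: ne; rewrite -val_eqE => ->.
Qed.

Lemma mxtrace_left_env_trunc_le1 : \tr (left_env P P N) <= 1.
Proof.
pose zN := cast_ord (esym chiN) ord0.
rewrite -(mxtrace_unit_gram _ _ _ _ chiN lamN) /mxtrace !(big_ord_singleton zN chiN).
by rewrite -!mxform_delta; apply: (left_env_proj_le _ _ _ _ _ canon).
Qed.

Lemma overlap_trace_N_le :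
  overlap_trace C chi Gam lam keep N <= \tr (left_env I I N) + \tr (left_env P P N).
Proof.
by rewrite /overlap_trace -!mps_norm2 // -!mps_amp_inner // -big_split sum_cross_le.
Qed.

Lemma sum_discarded_weight :
  \sum_(j < N) discarded_weight C chi lam keep j.+1 = eps C chi lam N chi'.
Proof.
rewrite /eps /truncation_keep; case: N lam_ge0 => [|n] lam_ge0'.
  by rewrite big_ord0 big_geq.
rewrite big_ord_recr big_add1 /= big_mkord [discarded_weight _ _ _ _ _]big_pred0.
  rewrite addr0; apply: eq_bigr => i _; apply: eq_big => [a|a _].
    by rewrite /= ltnS ltn_ord /= -leqNgt.
  by rewrite ger0_norm // lam_ge0' // ltnS ltnW.
by move=> a; rewrite ltnn andbF.
Qed.

Lemma eps_ge0 : 0 <= eps C chi lam N chi'.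
Proof.
rewrite -sum_discarded_weight sumr_ge0 // => j _.
by rewrite sumr_ge0 // => a _; rewrite exprn_ge0.
Qed.

Lemma overlap_trace0 : overlap_trace C chi Gam lam keep 0 = 2%:R.
Proof. by rewrite /overlap_trace /= mxtrace_unit_gram. Qed.

Lemma mxtrace_left_env_trunc_ge :
  1 - 2%:R * eps C chi lam N chi' <= \tr (left_env P P N).
Proof.
have := overlap_trace_le _ _ _ _ _ canon keep _ (leqnn N).
rewrite overlap_trace0 sum_discarded_weight.
move=> /le_trans /(_ (lerD overlap_trace_N_le (lexx _))).
rewrite (left_envT _ _ _ _ _ canon) // mxtrace_unit_gram // => le2.
by rewrite lerBlDr -(lerD2l 1) addrA.
Qed.

End Truncation.

Theorem lemma2 (C : numClosedFieldType) (N : nat) (chi : nat -> nat)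
  (Gam : forall k : nat, 'I_2 -> 'M[C]_(chi k, chi k.+1))
  (lam : forall j : nat, 'I_(chi j) -> C) (chi' : nat) :
  chi 0%N = 1%N -> chi N = 1%N ->
  lambda_ok C chi lam N ->
  canonical C chi Gam lam N ->
  state_norm C chi Gam lam N (noQ C chi) = 1 ->
  (0 < chi')%N ->
  1 - sqrtC (2 * eps C chi lam N chi') <= state_norm C chi Gam lam N (projQ C chi N chi') /\
  state_norm C chi Gam lam N (projQ C chi N chi') <= 1.
Proof.
move=> chi0 chiN [lam_ge0 [_ [lam0 lamN]]] canon _ _.
rewrite (state_norm_ext _ _ _ _ _ _ _ (projQ_truncation _ _ N chi')).
rewrite state_norm_left_env //; split.
  apply: sqrtC_one_sub_le.
  - by rewrite mulr_ge0 // eps_ge0.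
  - exact: mxtrace_left_env_ge0.
  - exact: mxtrace_left_env_trunc_ge.
rewrite -sqrtC1 ler_sqrtC ?nnegrE ?ler01 ?mxtrace_left_env_trunc_le1 //.
exact: mxtrace_left_env_ge0.
Qed.
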